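(* The energy matrix $\sigma$ is symmetric and positive-definite.
   Context: Fix integers $d,p\ge 1$. Let $(Z_n)=(A_n,M_n)$ be a Markov-additive process on $\mathbb{Z}^d\times\{1,\dots,p\}$ (a Markov chain with $\mathbb{P}_{(x,i)}((A_1,M_1)=(x',i'))=\mathbb{P}_{(0,i)}((A_1,M_1)=(x'-x,i'))$), with jump matrix $\mu_{i,j}(x)=\mathbb{P}_{(0,i)}((A_1,M_1)=(x,j))$, assumed irreducible, aperiodic (for every state $(x,i)$, $\gcd\{n\ge1:\mathbb{P}_{(x,i)}(Z_n=(x,i))>0\}=1$), with finite exponential moments ($\sum_xe^{\alpha\|x\|}\mu_{i,j}(x)<\infty$ for all $\alpha>0$). Let $\pi$ be the stationary distribution of the transition matrix $\big(\sum_x\mu_{i,j}(x)\big)_{i,j}$ of $(M_n)$; local drifts $m_{i,j}=\sum_x x\mu_{i,j}(x)$, global drift $m=\sum_{i,j}\pi_im_{i,j}$. A change of section is a real $p\times d$ matrix $g$ with rows $g_i$; the $g$-changed process has jump measures ${}^g\mu_{i,j}(x)=\mu_{i,j}(x+g_j-g_i)$ ($x\in\mathbb{R}^d$) and local drifts ${}^gm_{i,j}=\sum_xx\,{}^g\mu_{i,j}(x)$. A change of section is appropriate if $\sum_j{}^gm_{i,j}=m$ for all $i$; such $g$ exist and the resulting measures ${}^g\mu_{i,j}$ do not depend on the appropriate $g$. The energy matrix is the $d\times d$ matrix $\sigma_{k,l}=\sum_{x\in\mathbb{R}^d}x_kx_l\sum_{i,j=1}^p\pi_i\,{}^g\mu_{i,j}(x)$,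 $g$ appropriate. *)

From HB Require Import structures.
From mathcomp Require Import all_boot all_order all_algebra.
From mathcomp Require Import all_classical all_reals all_analysis.
Set Implicit Arguments. Unset Strict Implicit. Unset Printing Implicit Defensive.
Import Order.TTheory GRing.Theory Num.Theory.
Local Open Scope classical_set_scope.
Local Open Scope ring_scope.

(* Sum over a (countable or not) type of a real-valued function, as the
   difference of the (extended-real) sums of its positive and negative
   parts; this is the usual sum whenever the family is absolutely summable. *)
Definition rsum (R : realType) (T : choiceType) (f : T -> R) : R :=
  fine (\esum_(x in [set: T]) (Num.max (f x) 0)%:E)
  - fine (\esum_(x in [set: T]) (Num.max (- f x) 0)%:E).

(* Z^d is 'rV[int]_d; the modulating states {1..p} are 'I_p.
   A jump matrix mu i j x = P_(0,i)((A_1,M_1) = (x,j)). *)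
Definition jump_matrix (R : realType) (d p : nat)
    (mu : 'I_p -> 'I_p -> 'rV[int]_d -> R) : Prop :=
  (forall i j x, 0 <= mu i j x) /\
  (forall i, \esum_(jx in [set: 'I_p * 'rV[int]_d]) (mu i jx.1 jx.2)%:E = 1%E).

Definition mstep (R : realType) (d p : nat)
    (mu : 'I_p -> 'I_p -> 'rV[int]_d -> R)
    (s t : 'rV[int]_d * 'I_p) : R :=
  mu s.2 t.2 (t.1 - s.1).

Fixpoint nstep (R : realType) (d p : nat)
    (mu : 'I_p -> 'I_p -> 'rV[int]_d -> R) (n : nat)
    (s t : 'rV[int]_d * 'I_p) : \bar R :=
  match n with
  | 0 => ((s == t)%:R)%:E
  | n'.+1 => \esum_(u in [set: 'rV[int]_d * 'I_p])
               (nstep mu n' s u * (mstep mu u t)%:E)%E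
  end.

Definition irreducible (R : realType) (d p : nat)
    (mu : 'I_p -> 'I_p -> 'rV[int]_d -> R) : Prop :=
  forall s t, exists n, (0 < nstep mu n s t)%E.

(* gcd {n >= 1 : P_s(Z_n = s) > 0} = 1 for every state s *)
Definition aperiodic (R : realType) (d p : nat)
    (mu : 'I_p -> 'I_p -> 'rV[int]_d -> R) : Prop :=
  forall s, forall k : nat,
    (forall n : nat, (0 < n)%N -> (0 < nstep mu n s s)%E -> (k %| n)%N) ->
    k = 1%N.

Definition znorm (R : realType) (d : nat) (x : 'rV[int]_d) : R :=
  \sum_(k < d) `|(x 0 k)%:~R : R|.

Definition exp_moments (R : realType) (d p : nat)
    (mu : 'I_p -> 'I_p -> 'rV[int]_d -> R) : Prop :=
  forall alpha : R, 0 < alpha -> forall i j,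
    (\esum_(x in [set: 'rV[int]_d]) (expR (alpha * znorm R x) * mu i j x)%:E
       < +oo)%E.

Definition mod_trans (R : realType) (d p : nat)
    (mu : 'I_p -> 'I_p -> 'rV[int]_d -> R) (i j : 'I_p) : R :=
  rsum (mu i j).

Definition stationary (R : realType) (d p : nat)
    (mu : 'I_p -> 'I_p -> 'rV[int]_d -> R) (pi : 'I_p -> R) : Prop :=
  [/\ forall i, 0 <= pi i, \sum_i pi i = 1 &
      forall j, pi j = \sum_i pi i * mod_trans mu i j].

Definition local_drift (R : realType) (d p : nat)
    (mu : 'I_p -> 'I_p -> 'rV[int]_d -> R) (i j : 'I_p) : 'rV[R]_d :=
  \row_k rsum (fun x : 'rV[int]_d => (x 0 k)%:~R * mu i j x).

Definition global_drift (R : realType) (d p : nat)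
    (mu : 'I_p -> 'I_p -> 'rV[int]_d -> R) (pi : 'I_p -> R) : 'rV[R]_d :=
  \sum_i \sum_j pi i *: local_drift mu i j.

(* mu_{i,j} seen as a measure on R^d (zero off Z^d) *)
Definition muR (R : realType) (d p : nat)
    (mu : 'I_p -> 'I_p -> 'rV[int]_d -> R) (i j : 'I_p) (x : 'rV[R]_d) : R :=
  if [forall k, x 0 k \is a Num.int] then mu i j (map_mx (@Num.floor R) x)
  else 0.

Definition gmu (R : realType) (d p : nat)
    (mu : 'I_p -> 'I_p -> 'rV[int]_d -> R) (g : 'M[R]_(p, d))
    (i j : 'I_p) (x : 'rV[R]_d) : R :=
  muR mu i j (x + row j g - row i g).

Definition g_drift (R : realType) (d p : nat)
    (mu : 'I_p -> 'I_p -> 'rV[int]_d -> R) (g : 'M[R]_(p, d))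
    (i j : 'I_p) : 'rV[R]_d :=
  \row_k rsum (fun x : 'rV[R]_d => x 0 k * gmu mu g i j x).

Definition appropriate (R : realType) (d p : nat)
    (mu : 'I_p -> 'I_p -> 'rV[int]_d -> R) (pi : 'I_p -> R)
    (g : 'M[R]_(p, d)) : Prop :=
  forall i, \sum_j g_drift mu g i j = global_drift mu pi.

Definition energy (R : realType) (d p : nat)
    (mu : 'I_p -> 'I_p -> 'rV[int]_d -> R) (pi : 'I_p -> R)
    (g : 'M[R]_(p, d)) : 'M[R]_d :=
  \matrix_(k, l) rsum (fun x : 'rV[R]_d =>
     x 0 k * x 0 l * \sum_i \sum_j pi i * gmu mu g i j x).

(* The quadratic form of the energy matrix is v sigma v^T = sum_x (v.x)^2 w(x)
   with w = sum_(i,j) pi_i ^g mu_(i,j) >= 0 (the exponential moments make every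
   sum absolutely convergent), so it is nonnegative and vanishes only if v.x = 0
   on the support of w.  That support contains y - g_j + g_i whenever pi_i > 0
   and mu_(i,j)(y) > 0.  Then phi(x, i) = v.(x - g_i) is constant along the
   paths of the chain started where pi > 0, a set the chain cannot leave since
   pi is stationary.  Irreducibility joins (0, i) to (e_k, i), hence
   v_k = phi(e_k, i) - phi(0, i) = 0 for every k. *)

From HB Require Import structures.
From mathcomp Require Import all_boot all_order all_algebra.
From mathcomp Require Import all_classical all_reals all_analysis.
From mathcomp Require Import lra ring.
Import Order.TTheory GRing.Theory Num.Theory.
Set Implicit Arguments. Unset Strict Implicit. Unset Printing Implicit Defensive.
Local Open Scope ring_scope.

Section RealSum.
Variables (R : realType) (T : choiceType).
Implicit Types (f g h : T -> R).

Definition rsummable f := summable [set: T] (EFin \o f).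

Lemma esumZl (c : R) (a : T -> \bar R) : 0 <= c -> (forall x, (0 <= a x)%E) ->
  (\esum_(x in [set: T]) (c%:E * a x) = c%:E * \esum_(x in [set: T]) a x)%E.
Proof.
move=> c0 a0; rewrite /esum -ereal_supZl//; last first.
  by apply/set0P; exists 0%E, set0; [exact: fsets_set0 | rewrite fsbig_set0].
congr ereal_sup; apply/seteqP; split=> y /=.
  by move=> [A fA <-]; exists (\sum_(x \in A) a x)%E; [exists A | rewrite ge0_mule_fsumr].
by move=> [z [A fA <-] <-]; exists A => //; rewrite ge0_mule_fsumr.
Qed.

(* Also when the sum is +oo, because fine +oo = 0. *)
Lemma fine_esumZl (c : R) h : 0 <= c -> (forall x, 0 <= h x) ->
  fine (\esum_(x in [set: T]) (c * h x)%:E) = c * fine (\esum_(x in [set: T]) (h x)%:E).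
Proof.
move=> c0 h0; have h0E x : (0 <= (h x)%:E)%E by rewrite lee_fin.
under eq_esum do rewrite EFinM.
rewrite esumZl //.
have [->|cn0] := eqVneq c 0; first by rewrite mul0e mul0r.
have cgt0 : 0 < c by rewrite lt_def cn0.
by case: (\esum_(x in _) _)%E => [r||] //=; rewrite ?gt0_muley ?gt0_muleNy ?mulr0.
Qed.

Lemma rsummable_le f g : (forall x, `|f x| <= `|g x|) -> rsummable g -> rsummable f.
Proof. by move=> fg; apply: le_lt_trans; apply: le_esum => x _; rewrite lee_fin. Qed.

Lemma rsummableD f g : rsummable f -> rsummable g -> rsummable (f \+ g).
Proof.
by move=> sf sg; have := summableD sf sg; congr summable; apply/funext => x /=; rewrite EFinD.
Qed.

Lemma rsummableZ (c : R) f : rsummable f -> rsummable (fun x => c * f x).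
Proof.
move=> sf; rewrite /rsummable /summable.
under eq_esum do rewrite /= normrM EFinM.
by rewrite esumZl // lte_mul_pinfty.
Qed.

Lemma rsummable_sum (I : Type) (r : seq I) (F : I -> T -> R) :
  (forall i, rsummable (F i)) -> rsummable (fun x => \sum_(i <- r) F i x).
Proof.
move=> sF; elim: r => [|i r IH].
  under [fun x => _]funext do rewrite big_nil.
  by rewrite /rsummable /summable esum1 // => x _ /=; rewrite normr0.
by under [fun x => _]funext do rewrite big_cons; exact: rsummableD.
Qed.

Lemma fin_num_esum f : (forall x, 0 <= f x) -> rsummable f ->
  (\esum_(x in [set: T]) (f x)%:E)%E \is a fin_num.
Proof.
by move=> f0; rewrite /rsummable summableE; under eq_esum do rewrite /= ger0_norm //.
Qed.

Lemma rsummable_funrpos f : rsummable f -> rsummable f^\+.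
Proof. by apply: rsummable_le => x; rewrite ger0_norm // ge_max normr_ge0 ler_norm. Qed.

Lemma rsummable_funrneg f : rsummable f -> rsummable f^\-.
Proof.
by apply: rsummable_le => x; rewrite ger0_norm ?funrneg_ge0 // ge_max normr_ge0 -normrN ler_norm.
Qed.

Lemma rsumE f : rsum f =
  fine (\esum_(x in [set: T]) (f^\+ x)%:E) - fine (\esum_(x in [set: T]) (f^\- x)%:E).
Proof. by []. Qed.

Lemma ge0_rsumB f g : (forall x, 0 <= f x) -> (forall x, 0 <= g x) ->
  rsummable f -> rsummable g -> rsum (f - g) =
  fine (\esum_(x in [set: T]) (f x)%:E) - fine (\esum_(x in [set: T]) (g x)%:E).
Proof.
move=> f0 g0 sf sg; have sfg : rsummable (f - g).
  by apply: rsummableD sf _; apply: rsummable_le sg => x; rewrite normrN.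
have := esumB sf sg (fun x _ => f0 x) (fun x _ => g0 x).
have -> : ((EFin \o f) \- (EFin \o g))%E = EFin \o (f - g) by apply/funext=> x /=; rewrite EFinB.
rewrite funerpos funerneg => /(congr1 fine).
rewrite rsumE !fineB //; apply: fin_num_esum => //.
- exact: rsummable_funrpos.
- exact: rsummable_funrneg.
Qed.

Lemma fine_esumD f g : (forall x, 0 <= f x) -> (forall x, 0 <= g x) ->
  rsummable f -> rsummable g ->
  fine (\esum_(x in [set: T]) (f x + g x)%:E) =
  fine (\esum_(x in [set: T]) (f x)%:E) + fine (\esum_(x in [set: T]) (g x)%:E).
Proof.
move=> f0 g0 sf sg; under eq_esum do rewrite EFinD.
by rewrite esumD ?fineD ?fin_num_esum // => x _; rewrite lee_fin.
Qed.

Lemma rsumD f g : rsummable f -> rsummable g -> rsum (f \+ g) = rsum f + rsum g.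
Proof.
move=> sf sg; have [sfp sfn] := (rsummable_funrpos sf, rsummable_funrneg sf).
have [sgp sgn] := (rsummable_funrpos sg, rsummable_funrneg sg).
rewrite -[f \+ g]/(f + g) -funrDB ge0_rsumB ?rsummableD // => [|x|x].
- by rewrite (@fine_esumD f^\+ g^\+) ?(@fine_esumD f^\- g^\-) // /rsum; lra.
- exact: addr_ge0.
- exact: addr_ge0.
Qed.

Lemma rsumZ (c : R) f : rsum (fun x => c * f x) = c * rsum f.
Proof.
rewrite !rsumE; have [c0|/ltW c0] := leP 0 c.
  rewrite ge0_funrposM // ge0_funrnegM //.
  by rewrite (@fine_esumZl c f^\+) ?(@fine_esumZl c f^\-) // mulrBr.
rewrite le0_funrposM // le0_funrnegM //.
rewrite (@fine_esumZl (- c) f^\+) ?(@fine_esumZl (- c) f^\-) ?oppr_ge0 //; ring.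
Qed.

Lemma rsum_sum (I : Type) (r : seq I) (F : I -> T -> R) :
  (forall i, rsummable (F i)) ->
  rsum (fun x => \sum_(i <- r) F i x) = \sum_(i <- r) rsum (F i).
Proof.
move=> sF; elim: r => [|i r IH].
  under [fun x => _]funext do rewrite big_nil.
  by rewrite big_nil /rsum !esum1 ?subrr // => x _; rewrite ?oppr0 maxxx.
under [fun x => _]funext do rewrite big_cons.
by rewrite rsumD ?big_cons ?IH //; exact: rsummable_sum.
Qed.

Lemma ge0_rsumE f : (forall x, 0 <= f x) -> rsum f = fine (\esum_(x in [set: T]) (f x)%:E).
Proof.
move=> f0; rewrite rsumE [X in _ - fine X]esum1 ?subr0 => [|x _].
  by congr (fine _); apply: eq_esum => x _; rewrite /funrpos (max_idPl _).
by rewrite /funrneg (max_idPr _) // oppr_le0.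
Qed.

Lemma rsum_ge0 f : (forall x, 0 <= f x) -> 0 <= rsum f.
Proof. by move=> f0; rewrite ge0_rsumE // fine_ge0 // esum_ge0 // => x _; rewrite lee_fin. Qed.

Lemma rsum_gt0 f x0 : (forall x, 0 <= f x) -> rsummable f -> 0 < f x0 -> 0 < rsum f.
Proof.
move=> f0 sf fx0; rewrite ge0_rsumE // fine_gt0 //.
have := fin_num_esum f0 sf; rewrite ge0_fin_numE => [->|]; last first.
  by rewrite esum_ge0 // => x _; rewrite lee_fin.
rewrite andbT; apply: (@lt_le_trans _ _ (f x0)%:E); first by rewrite lte_fin.
apply: esum_ge; exists [set x0]%classic; last by rewrite fsbig_set1.
by split => //; exact: finite_set1.
Qed.

End RealSum.

Lemma esum_translate (R : realType) (V : zmodType) (a : V -> \bar R) (c : V) :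
  \esum_(x in [set: V]) a (x + c) = \esum_(x in [set: V]) a x.
Proof.
rewrite [RHS](reindex_esum setT setT (+%R^~ c)) // setTT_bijective.
by exists (+%R^~ (- c)) => x /=; rewrite ?addrK ?subrK.
Qed.

Lemma normr_subr_le_expR (R : realType) (a c N : R) :
  `|a| <= N -> `|a - c| <= (1 + `|c|) * expR N.
Proof.
move=> aN; apply: le_trans (ler_normB a c) _.
have := expR_ge1Dx N; have := normr_ge0 a; have := normr_ge0 c; nra.
Qed.

Section JumpMeasures.
Variables (R : realType) (d p : nat) (mu : 'I_p -> 'I_p -> 'rV[int]_d -> R).
Hypothesis mu_ge0 : forall i j x, 0 <= mu i j x.
Hypothesis mu_exp : exp_moments mu.

Lemma normr_le_znorm (z : 'rV[int]_d) k : `|(z 0 k)%:~R : R| <= znorm R z.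
Proof. by rewrite /znorm (bigD1 k) //= lerDl sumr_ge0. Qed.

Lemma rsummable_mu i j : rsummable (mu i j).
Proof.
apply: (@rsummable_le _ _ _ (fun z => expR (1 * znorm R z) * mu i j z)) => [z|].
  rewrite !ger0_norm ?mulr_ge0 ?expR_ge0 // ler_peMl // mul1r.
  by apply: le_trans (expR_ge1Dx _); rewrite lerDl sumr_ge0.
rewrite /rsummable /summable; under eq_esum do rewrite /= ger0_norm ?mulr_ge0 ?expR_ge0 //.
exact: mu_exp.
Qed.

Lemma muR_intr i j z : muR mu i j (map_mx intr z) = mu i j z.
Proof.
rewrite /muR (_ : [forall k, _] = true); last by apply/forallP => k; rewrite mxE intr_int.
by congr (mu i j); apply/rowP => k; rewrite !mxE intrKfloor.
Qed.

Lemma muR_notin_range i j x : x \notin range (map_mx intr) -> muR mu i j x = 0.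
Proof.
rewrite /muR; case: ifPn => // /forallP x_int /negP[]; rewrite inE.
by exists (map_mx (@Num.floor R) x) => //; apply/rowP => k; rewrite !mxE floorK.
Qed.

Lemma gmu_ge0 g i j x : 0 <= gmu mu g i j x.
Proof. by rewrite /gmu /muR; case: ifP. Qed.

Lemma esum_muR (h : 'rV[R]_d -> R) i j :
  \esum_(x in [set: 'rV[R]_d]) (`|h x * muR mu i j x|)%:E =
  \esum_(z in [set: 'rV[int]_d]) (`|h (map_mx intr z)| * mu i j z)%:E.
Proof.
rewrite (eq_esum (b := fun x => if x \in range (map_mx intr)
                                then (`|h x * muR mu i j x|)%:E else 0%E)); last first.
  by move=> x _; case: ifPn => // /muR_notin_range ->; rewrite mulr0 normr0.
rewrite -esum_mkcond esum_image => [|a b _ _ /rowP ab]; last first.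
  by apply/rowP => k; have := ab k; rewrite !mxE => /intr_inj.
by apply: eq_esum => z _; rewrite muR_intr normrM (ger0_norm (mu_ge0 _ _ _)).
Qed.

Lemma rsummable_gmu g i j k l :
  rsummable (fun x : 'rV[R]_d => x 0 k * x 0 l * gmu mu g i j x).
Proof.
pose c := row j g - row i g; pose K := (1 + `|c 0 k|) * (1 + `|c 0 l|).
rewrite /rsummable /summable /=.
pose A y := (`|(y - c) 0 k * (y - c) 0 l * muR mu i j y|)%:E.
rewrite (eq_esum (b := fun x => A (x + c))) => [|x _]; last by rewrite /A addrK /gmu -addrA.
rewrite esum_translate esum_muR.
apply: (@le_lt_trans _ _ (\esum_(z in [set: _]) (K%:E * (expR (2 * znorm R z) * mu i j z)%:E))%E).
  apply: le_esum => z _; rewrite -EFinM lee_fin mulrA ler_wpM2r ?mu_ge0 //.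
  have entryB m : (map_mx intr z - c) 0 m = (z 0 m)%:~R - c 0 m by rewrite !mxE.
  rewrite normrM !entryB (_ : 2 * _ = znorm R z + znorm R z); last by ring.
  rewrite expRD mulrACA; apply: ler_pM => //; apply: normr_subr_le_expR; exact: normr_le_znorm.
have K0 : 0 <= K by rewrite mulr_ge0 // addr_ge0.
rewrite esumZl // => [|z]; first by apply: lte_mul_pinfty => //; exact: mu_exp.
by rewrite lee_fin mulr_ge0 ?expR_ge0 ?mu_ge0.
Qed.

End JumpMeasures.

Section MarkovAdditive.
Variables (R : realType) (d p : nat) (mu : 'I_p -> 'I_p -> 'rV[int]_d -> R).

Lemma nstep_closed (Q : 'rV[int]_d * 'I_p -> Prop) :
  (forall u t, Q u -> mstep mu u t != 0 -> Q t) ->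
  forall n s t, Q s -> nstep mu n s t != 0%E -> Q t.
Proof.
move=> Qstep n s; elim: n => [|n IH] t Qs /=.
  by case: (eqVneq s t) => [<- //|_]; rewrite mulr0n eqxx.
move=> nz; apply: contrapT => nQt; move: nz; rewrite esum1 ?eqxx // => u _.
have [->|nz_su] := eqVneq (nstep mu n s u) 0%E; first by rewrite mul0e.
have [->|nz_ut] := eqVneq (mstep mu u t) 0; first by rewrite mule0.
by case: nQt; exact: Qstep (IH u Qs nz_su) nz_ut.
Qed.

Hypothesis mu_ge0 : forall i j x, 0 <= mu i j x.
Hypothesis mu_summable : forall i j, rsummable (mu i j).

Lemma stationary_exists_gt0 pi : stationary mu pi -> exists i, 0 < pi i.
Proof.
case=> pi_ge0 pi_sum _; have : \sum_i pi i != 0 by rewrite pi_sum oner_neq0.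
by rewrite psumr_neq0 // => /hasP[i _ /= pi_i]; exists i.
Qed.

Lemma stationary_succ_gt0 pi i j y :
  stationary mu pi -> 0 < pi i -> 0 < mu i j y -> 0 < pi j.
Proof.
case=> pi_ge0 _ pi_inv pi_i mu_y; rewrite pi_inv (bigD1 i) //=.
apply: ltr_wpDr; first by apply: sumr_ge0 => k _; rewrite mulr_ge0 ?rsum_ge0.
by rewrite mulr_gt0 // (rsum_gt0 (x0 := y)).
Qed.

Lemma orthogonal_increments_eq0 pi (g : 'M[R]_(p, d)) (v : 'rV[R]_d) :
  irreducible mu -> stationary mu pi ->
  (forall i j y, 0 < pi i -> 0 < mu i j y ->
     (map_mx intr y - row j g + row i g) *m v^T = 0) ->
  v = 0.
Proof.
move=> irr st orth; have [i0 pi_i0] := stationary_exists_gt0 st.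
pose phi (s : 'rV[int]_d * 'I_p) := (map_mx intr s.1 - row s.2 g) *m v^T.
have phi_step u t : 0 < pi u.2 -> mstep mu u t != 0 -> 0 < pi t.2 /\ phi t = phi u.
  move=> pi_u mu_ut; have mu_pos : 0 < mu u.2 t.2 (t.1 - u.1) by rewrite lt_def mu_ut mu_ge0.
  split; first exact: stationary_succ_gt0 st pi_u mu_pos.
  apply/eqP; rewrite -subr_eq0 -mulmxBl -(orth _ _ _ pi_u mu_pos) map_mxB.
  by apply/eqP; congr (_ *m _); apply/rowP => k; rewrite !mxE; ring.
have phi_const n t : nstep mu n (0, i0) t != 0%E -> phi t = phi (0, i0).
  move=> nz; suff [] : 0 < pi t.2 /\ phi t = phi (0, i0) by [].
  apply: (@nstep_closed (fun w => 0 < pi w.2 /\ phi w = phi (0, i0)) _ n (0, i0)) nz => //.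
  by move=> u w [pi_u <-]; exact: phi_step.
apply/rowP => k; have [n nz] := irr (0, i0) (delta_mx 0 k, i0).
move/eqP: (phi_const n _ (negbT (gt_eqF nz))); rewrite -subr_eq0 -mulmxBl /=.
rewrite map_delta_mx map_mx0 sub0r opprK subrK -rowE => /eqP/matrixP/(_ 0 0).
by rewrite !mxE.
Qed.

End MarkovAdditive.

Section Energy.
Variables (R : realType) (d p : nat) (mu : 'I_p -> 'I_p -> 'rV[int]_d -> R).
Variables (pi : 'I_p -> R) (g : 'M[R]_(p, d)).

Definition pi_gmu (x : 'rV[R]_d) : R := \sum_i \sum_j pi i * gmu mu g i j x.

Lemma energy_trmx : (energy mu pi g)^T = energy mu pi g.
Proof.
by apply/matrixP => k l; rewrite !mxE; congr rsum; apply/funext => x; rewrite (mulrC (x 0 l)).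
Qed.

Lemma sqr_mulmx_trE (x v : 'rV[R]_d) (w : R) :
  ((x *m v^T) 0 0) ^+ 2 * w = \sum_k \sum_l v 0 k * v 0 l * (x 0 k * x 0 l * w).
Proof.
rewrite mxE expr2 big_distrlr mulr_suml /=; apply: eq_bigr => k _.
by rewrite mulr_suml; apply: eq_bigr => l _; rewrite !mxE; ring.
Qed.

Lemma energy_quadratic_form (v : 'rV[R]_d) :
  (forall k l, rsummable (fun x : 'rV[R]_d => x 0 k * x 0 l * pi_gmu x)) ->
  (v *m energy mu pi g *m v^T) 0 0 = rsum (fun x => ((x *m v^T) 0 0) ^+ 2 * pi_gmu x).
Proof.
move=> sE; under [fun x => _]funext do rewrite sqr_mulmx_trE.
rewrite rsum_sum => [|k]; last by apply: rsummable_sum => l; exact: rsummableZ.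
rewrite mxE; under eq_bigr do rewrite !mxE big_distrl /=.
rewrite exchange_big; apply: eq_bigr => k _ /=.
rewrite rsum_sum => [|l]; last exact: rsummableZ.
by apply: eq_bigr => l _; rewrite rsumZ !mxE mulrAC.
Qed.

Hypothesis mu_ge0 : forall i j x, 0 <= mu i j x.
Hypothesis mu_exp : exp_moments mu.
Hypothesis mu_irr : irreducible mu.
Hypothesis pi_stationary : stationary mu pi.

Let pi_ge0 i : 0 <= pi i. Proof. by case: pi_stationary. Qed.

Lemma pi_gmu_ge0 x : 0 <= pi_gmu x.
Proof. by do 2 apply: sumr_ge0 => ? _; rewrite mulr_ge0 ?(gmu_ge0 mu_ge0). Qed.

Lemma pi_gmu_gt0 i j y : 0 < pi i -> 0 < mu i j y ->
  0 < pi_gmu (map_mx intr y - row j g + row i g).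
Proof.
move=> pi_i mu_y; set x := map_mx intr y - row j g + row i g.
have gmu_x : gmu mu g i j x = mu i j y.
  rewrite /gmu (_ : x + _ - _ = map_mx intr y) ?muR_intr //.
  by apply/rowP => m; rewrite /x !mxE; ring.
have term_ge0 i' j' : 0 <= pi i' * gmu mu g i' j' x by rewrite mulr_ge0 ?(gmu_ge0 mu_ge0).
apply: (lt_le_trans (_ : 0 < pi i * mu i j y)); first exact: mulr_gt0.
rewrite /pi_gmu (bigD1 i) //= (bigD1 j) //= gmu_x -addrA lerDl.
by rewrite addr_ge0 ?sumr_ge0 // => i' _; rewrite sumr_ge0.
Qed.

Lemma rsummable_energy_integrand k l :
  rsummable (fun x : 'rV[R]_d => x 0 k * x 0 l * pi_gmu x).
Proof.
have -> : (fun x : 'rV[R]_d => x 0 k * x 0 l * pi_gmu x) =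
          (fun x => \sum_i \sum_j pi i * (x 0 k * x 0 l * gmu mu g i j x)).
  apply/funext => x; rewrite /pi_gmu mulr_sumr; apply: eq_bigr => i _.
  by rewrite mulr_sumr; apply: eq_bigr => j _; rewrite mulrCA.
by do 2 apply: rsummable_sum => ?; apply: rsummableZ; exact: rsummable_gmu.
Qed.

Lemma energy_posdef (v : 'rV[R]_d) : v != 0 -> 0 < (v *m energy mu pi g *m v^T) 0 0.
Proof.
move=> v0; rewrite energy_quadratic_form; last exact: rsummable_energy_integrand.
have [x x_pos] : exists x, 0 < ((x *m v^T) 0 0) ^+ 2 * pi_gmu x.
  apply: contrapT => none; move/eqP: v0; apply.
  have mu_summable := rsummable_mu mu_ge0 mu_exp.
  apply: (orthogonal_increments_eq0 mu_ge0 mu_summable (g := g) mu_irr pi_stationary).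
  move=> i j y pi_i mu_y; apply/matrixP => a b; rewrite !ord1 [RHS]mxE.
  apply: contrapT => nz; apply: none; exists (map_mx intr y - row j g + row i g).
  by rewrite mulr_gt0 ?pi_gmu_gt0 // lt_def sqr_ge0 sqrf_eq0 andbT; exact/eqP.
apply: (rsum_gt0 (x0 := x)) => // [z|].
  by rewrite mulr_ge0 ?sqr_ge0 ?pi_gmu_ge0.
under [fun z => _]funext do rewrite sqr_mulmx_trE.
by do 2 apply: rsummable_sum => ?; apply: rsummableZ; exact: rsummable_energy_integrand.
Qed.

End Energy.

Unset Implicit Arguments.

Theorem proposition2p8 (R : realType) (d p : nat)
  (mu : 'I_p -> 'I_p -> 'rV[int]_d -> R) (pi : 'I_p -> R) (g : 'M[R]_(p, d)) :
  (0 < d)%N -> (0 < p)%N ->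
  jump_matrix mu -> irreducible mu -> aperiodic mu -> exp_moments mu ->
  stationary mu pi -> appropriate mu pi g ->
  (energy mu pi g)^T = energy mu pi g /\
  (forall v : 'rV[R]_d, v != 0 -> 0 < (v *m energy mu pi g *m v^T) 0 0).
Proof.
move=> _ _ [mu_ge0 _] mu_irr _ mu_exp pi_stationary _.
split; first exact: energy_trmx.
exact: energy_posdef mu_ge0 mu_exp mu_irr pi_stationary.
Qed.
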